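(* Let $\Gamma\subset PGL_{2n+2}(\mathbb{C})$ be a group of type $\mathcal{L}$, and suppose the homogeneous coordinates $[z':z'']$ on $\mathbb{P}^{2n+1}$ are such that there is $R>0$ with $V_R=\{[z':z'']: \|z'\|>R\|z''\|\}\subset\Omega(\Gamma)$ and $g(V_R)\cap V_R=\emptyset$ for every $g\in\Gamma\setminus\{1\}$. Then there is a constant $R_0>0$ such that for every $g\in\Gamma\setminus\{1\}$, with representative $\begin{pmatrix}A_g&B_g\\C_g&D_g\end{pmatrix}\in SL_{2n+2}(\mathbb{C})$: (i) $\det C_g\neq0$; (ii) $\|A_gC_g^{-1}\|\leq R_0$; (iii) $\|C_g^{-1}D_g\|\leq R_0$.
   Context: $z'=(z^0,\dots,z^n)$, $z''=(z^{n+1},\dots,z^{2n+1})$; $\|\cdot\|$ is the Euclidean norm on vectors and the associated operator norm on matrices; $A_g,B_g,C_g,D_g\in M_{n+1}(\mathbb{C})$. Type $\mathcal{L}$: an $n$-plane is an $n$-dimensional projective linear subspace of $\mathbb{P}^{2n+1}$; with $N=\binom{2n+2}{n+1}-1$, $\mathcal{G}\subset\mathbb{P}^N=\mathbb{P}(\Lambda^{n+1}\mathbb{C}^{2n+2})$ the Plücker-embedded Grassmannian, $\hat\ell$ the Plücker point of $\ell$ and $\hat\sigma$ the induced action of $\sigma$ on $\mathbb{P}^N$; for pairwise distinct $(\tau_\nu)\subset PGL_{m+1}(\mathbb{C})$ with representatives normalized to have largest entry of absolute value $1$ that can be chosen to converge to $T$, the limit image is $\mathbb{P}(\operatorname{Im}T)$;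 a sequence in a discrete $\Gamma$ is normal if it consists of distinct elements and both it and $(\hat\sigma_\nu)$ have such convergent representatives; a limit $n$-plane is an $\ell$ with $\hat\ell$ in the limit image of some $(\hat\sigma_\nu)$ with $(\sigma_\nu)$ normal; $\Omega(\Gamma)$ is the complement of the union of limit $n$-planes; $\Gamma$ is of type $\mathcal{L}$ if it is discrete and $\Omega(\Gamma)$ contains a domain containing an $n$-plane. *)

From HB Require Import structures.
From mathcomp Require Import all_boot all_order all_algebra.
From mathcomp Require Import complex.
From mathcomp Require Import boolp classical_sets reals.
Set Implicit Arguments. Unset Strict Implicit. Unset Printing Implicit Defensive.
Import Order.TTheory GRing.Theory Num.Theory.
Local Open Scope ring_scope.
Local Open Scope classical_set_scope.

Section Defs.
Variable R : realType.
Local Notation C := R[i].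
Local Notation cabs := (@Normc.normc R).

Section Generic.
Variable S : finType.

(* equality in PGL: proportional representatives *)
Definition proj_eqf (A B : S -> S -> C) :=
  exists c : C, c != 0 /\ forall i j, A i j = c * B i j.

Definition normalizedf (A : S -> S -> C) :=
  (exists i j, cabs (A i j) = 1) /\ (forall i j, cabs (A i j) <= 1).

Definition cvgf (u : nat -> S -> S -> C) (T : S -> S -> C) :=
  forall e : R, 0 < e -> exists N : nat, forall k : nat, (N <= k)%N ->
    forall i j, cabs (u k i j - T i j) < e.

Definition conv_reps (u : nat -> S -> S -> C) (T : S -> S -> C) :=
  (forall k k', k <> k' -> ~ proj_eqf (u k) (u k')) /\
  exists c : nat -> C, (forall k, c k != 0) /\
    (forall k, normalizedf (fun i j => c k * u k i j)) /\
    cvgf (fun k i j => c k * u k i j) T.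

(* p (a nonzero vector) represents a point of the limit image P(Im T) *)
Definition in_proj_image (T : S -> S -> C) (p : S -> C) :=
  (exists i, p i != 0) /\ exists y : S -> C, forall i, p i = \sum_j T i j * y j.
End Generic.

Variable n : nat.
Local Notation m := (n.+1 + n.+1)%N.   (* = 2n+2 homogeneous coordinates *)
Local Notation M := 'M[C]_m.

Definition mxf (A : M) : 'I_m -> 'I_m -> C := fun i j => A i j.

Definition proj_eq (A B : M) := proj_eqf (mxf A) (mxf B).

(* Gamma is given as the set of all representatives in GL_{2n+2}(C) of the
   elements of a subgroup of PGL_{2n+2}(C). *)
Definition pgl_subgroup (G : set M) :=
  [/\ forall A, G A -> A \in unitmx,
      G 1%:M,
      forall A B, G A -> G B -> G (A *m B),
      forall A, G A -> G (invmx A) &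
      forall A (c : C), G A -> c != 0 -> G (c *: A)].

(* discrete in PGL: no pairwise distinct sequence converges in PGL *)
Definition discrete_pgl (G : set M) :=
  ~ exists (s : nat -> M) (T : M),
      (forall k, G (s k)) /\ conv_reps (fun k => mxf (s k)) (mxf T) /\
      T \in unitmx.

(* index set of Pluecker coordinates: (n+1)-subsets of {0,...,2n+1} *)
Definition PIdx := {I : {set 'I_m} | #|I| == n.+1}.

Definition ix0 : 'I_m := lshift n.+1 (@ord0 n).

Definition idx (I : PIdx) (a : 'I_n.+1) : 'I_m := nth ix0 (enum (val I)) a.

(* induced action of sigma on P^N = P(Lambda^{n+1} C^{2n+2}) *)
Definition hat (s : M) : PIdx -> PIdx -> C :=
  fun I J => \det (\matrix_(a < n.+1, b < n.+1) s (idx I a) (idx J b)).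

(* an n-plane = span of the columns of a rank n+1 matrix L;
   its Pluecker point *)
Definition nplane (L : 'M[C]_(m, n.+1)) := \rank L = n.+1.

Definition pluecker (L : 'M[C]_(m, n.+1)) : PIdx -> C :=
  fun I => \det (\matrix_(a < n.+1, b < n.+1) L (idx I a) b).

Definition normal_seq (G : set M) (s : nat -> M) :=
  (forall k, G (s k)) /\
  (exists T, conv_reps (fun k => mxf (s k)) T) /\
  (exists T, conv_reps (fun k => hat (s k)) T).

Definition limit_nplane (G : set M) (L : 'M[C]_(m, n.+1)) :=
  nplane L /\ exists s T, normal_seq G s /\
    conv_reps (fun k => hat (s k)) T /\ in_proj_image T (pluecker L).

(* points of P^{2n+1}: nonzero column vectors; a set of points is a cone *)
Definition nonzero (x : 'cV[C]_m) := exists i, x i 0 != 0.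

Definition in_plane (x : 'cV[C]_m) (L : 'M[C]_(m, n.+1)) :=
  exists y : 'cV[C]_n.+1, x = L *m y.

Definition Omega (G : set M) : set 'cV[C]_m :=
  [set x | nonzero x /\ ~ exists L, limit_nplane G L /\ in_plane x L].

(* topology of P^{2n+1} through the cone C^{2n+2} \ {0} *)
Definition cone (U : set 'cV[C]_m) :=
  (forall x, U x -> nonzero x) /\ (forall x (c : C), U x -> c != 0 -> U (c *: x)).

Definition vopen (U : set 'cV[C]_m) :=
  forall x, U x -> exists2 e : R, 0 < e &
    forall y : 'cV[C]_m, (forall i, cabs (y i 0 - x i 0) < e) -> U y.

Definition vconnected (D : set 'cV[C]_m) :=
  forall U1 U2, vopen U1 -> vopen U2 -> D `<=` U1 `|` U2 ->
    D `&` U1 `&` U2 = set0 -> D `&` U1 = set0 \/ D `&` U2 = set0.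

Definition domain (D : set 'cV[C]_m) := cone D /\ vopen D /\ vconnected D.

Definition type_L (G : set M) :=
  pgl_subgroup G /\ discrete_pgl G /\
  exists D, domain D /\ D `<=` Omega G /\
    exists L, nplane L /\ forall x, nonzero x -> in_plane x L -> D x.

Definition vnorm {k} (v : 'cV[C]_k) : R := Num.sqrt (\sum_i cabs (v i 0) ^+ 2).

Definition opnorm {k} (A : 'M[C]_k) : R :=
  sup [set vnorm (A *m v) | v in [set v : 'cV[C]_k | vnorm v <= 1]].

Definition VR (r : R) : set 'cV[C]_m :=
  [set x | vnorm (usubmx x) > r * vnorm (dsubmx x)].

End Defs.

(* Only the group structure of Gamma and the disjointness of g(V_r) and V_r are
   needed, and R0 = r works.  A kernel vector u of C_g would give the point
   [u : 0] of V_r, which g maps to [A_g u : 0], again in V_r.  For w = C_g u,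
   g maps [u : 0] to [A_g u : w], which must leave V_r, so
   ||A_g C_g^-1 w|| <= r ||w||.  Finally the lower-left block of g g^-1 = 1
   gives C_g^-1 D_g = - A_h C_h^-1 for h = g^-1, which is bounded by the same
   argument applied to h. *)

From HB Require Import structures.
From mathcomp Require Import all_boot all_order all_algebra.
From mathcomp Require Import complex.
From mathcomp Require Import boolp classical_sets reals.
Set Implicit Arguments. Unset Strict Implicit. Unset Printing Implicit Defensive.
Import Order.TTheory GRing.Theory Num.Theory.
Local Open Scope ring_scope.
Local Open Scope classical_set_scope.

Section VectorNorm.
Variable R : realType.
Local Notation C := R[i].

Lemma vnorm0 k : vnorm (0 : 'cV[C]_k) = 0.
Proof. by rewrite /vnorm big1 ?sqrtr0 // => i _; rewrite mxE Normc.normc0 expr0n. Qed.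

Lemma vnorm_ge0 k (v : 'cV[C]_k) : 0 <= vnorm v.
Proof. exact: sqrtr_ge0. Qed.

Lemma vnorm_eq0 k (v : 'cV[C]_k) : (vnorm v == 0) = (v == 0).
Proof.
apply/idP/eqP => [|->]; last by rewrite vnorm0.
rewrite sqrtr_eq0 => sum_le0.
have sum_eq0 : \sum_i Normc.normc (v i 0) ^+ 2 = 0.
  by apply/eqP; rewrite eq_le sum_le0 sumr_ge0 // => i _; apply: sqr_ge0.
apply/matrixP => i j; rewrite (ord1 j) mxE.
have normc_sq_eq0 := psumr_eq0P (fun i _ => sqr_ge0 _) sum_eq0 (isT : predT i).
by apply/Normc.eq0_normc/eqP; rewrite -sqrf_eq0 normc_sq_eq0.
Qed.

Lemma vnorm_gt0 k (v : 'cV[C]_k) : (0 < vnorm v) = (v != 0).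
Proof. by rewrite lt_def vnorm_ge0 andbT vnorm_eq0. Qed.

Lemma vnormN k (v : 'cV[C]_k) : vnorm (- v) = vnorm v.
Proof. by congr Num.sqrt; apply: eq_bigr => i _; rewrite mxE normcN. Qed.

Lemma opnorm_le k (A : 'M[C]_k) (c : R) : 0 <= c ->
  (forall w, vnorm (A *m w) <= c * vnorm w) -> opnorm A <= c.
Proof.
move=> c_ge0 Aw_le; apply: ge_sup.
  by exists (vnorm (A *m 0)), 0; rewrite //= vnorm0 ler01.
move=> _ [w /= w_le1 <-]; apply: le_trans (Aw_le w) _.
by rewrite -[leRHS]mulr1 ler_wpM2l.
Qed.

End VectorNorm.

Section BlockMatrices.
Variable Rg : comUnitRingType.

Lemma mul_col_mx0 p1 p2 q1 q2 (g : 'M[Rg]_(p1 + p2, q1 + q2)) (u : 'cV_q1) :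
  g *m col_mx u 0 = col_mx (ulsubmx g *m u) (dlsubmx g *m u).
Proof. by rewrite -{1}(submxK g) mul_block_col !mulmx0 !addr0. Qed.

Lemma invmx_dlsubmx_mul_drsubmx p (g h : 'M[Rg]_(p + p)) :
  g *m h = 1%:M -> dlsubmx g \in unitmx -> dlsubmx h \in unitmx ->
  invmx (dlsubmx g) *m drsubmx g = - (ulsubmx h *m invmx (dlsubmx h)).
Proof.
move=> gh1 Cg_unit Ch_unit.
have blocks0 : dlsubmx g *m ulsubmx h + drsubmx g *m dlsubmx h = 0.
  have := congr1 dlsubmx gh1.
  by rewrite -{1}(submxK g) -{1}(submxK h) mulmx_block (scalar_mx_block p p) !block_mxKdl.
have DC : drsubmx g *m dlsubmx h = - (dlsubmx g *m ulsubmx h).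
  by apply/eqP; rewrite -addr_eq0 addrC blocks0.
by rewrite -[LHS](mulmxK Ch_unit) -(mulmxA (invmx _)) DC mulmxN mulKmx // mulNmx.
Qed.

End BlockMatrices.

Section ProjectiveIdentity.
Variables (R : realType) (n : nat).

Lemma proj_eq1P (A : 'M[R[i]]_(n.+1 + n.+1)) :
  proj_eq A 1%:M <-> exists2 c : R[i], c != 0 & A = c%:M.
Proof.
split=> [[c [c_neq0 Ac]] | [c c_neq0 ->]]; exists c => //.
  by apply/matrixP => i j; rewrite -[A i j]/(mxf A i j) Ac /mxf !mxE mulr_natr.
by split=> // i j; rewrite /mxf !mxE mulr_natr.
Qed.

Lemma proj_eq1_invmx (A : 'M[R[i]]_(n.+1 + n.+1)) :
  proj_eq (invmx A) 1%:M -> proj_eq A 1%:M.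
Proof.
case/proj_eq1P => c c_neq0 Ac; apply/proj_eq1P; exists c^-1.
  by rewrite invr_eq0.
by rewrite -(invmxK A) Ac invmx_scalar.
Qed.

End ProjectiveIdentity.

Section DisjointFromVR.
Variables (R : realType) (n : nat) (r : R) (g : 'M[R[i]]_(n.+1 + n.+1)).
Hypothesis g_unit : g \in unitmx.
Hypothesis g_VR_disjoint : forall x, VR r x -> ~ VR r (g *m x).

Lemma VR_col_mx0 (u : 'cV[R[i]]_n.+1) : VR r (col_mx u 0) <-> u != 0.
Proof. by rewrite /VR /= col_mxKu col_mxKd vnorm0 mulr0 vnorm_gt0. Qed.

Lemma dlsubmx_unit : dlsubmx g \in unitmx.
Proof.
rewrite unitmxE unitfE -det_tr; apply/negP => /det0P[v v_neq0 vC0].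
set u := v^T.
have u_neq0 : u != 0 by rewrite -trmx0 (inj_eq trmx_inj).
have Cu0 : dlsubmx g *m u = 0 by rewrite -[LHS]trmxK trmx_mul trmxK vC0 trmx0.
have gu_neq0 : g *m col_mx u 0 != 0.
  apply: contraNneq u_neq0 => gu0.
  have := congr1 (mulmx (invmx g)) gu0.
  by rewrite mulKmx // mulmx0 -col_mx0 => /eq_col_mx[->].
apply: (@g_VR_disjoint (col_mx u 0)); first exact/VR_col_mx0.
rewrite mul_col_mx0 Cu0 in gu_neq0 *; apply/VR_col_mx0.
by apply: contraNneq gu_neq0 => ->; rewrite col_mx0.
Qed.

Lemma vnorm_ulsubmx_mul_invmx_dlsubmx_le w :
  vnorm (ulsubmx g *m invmx (dlsubmx g) *m w) <= r * vnorm w.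
Proof.
have [-> | w_neq0] := eqVneq w 0; first by rewrite mulmx0 vnorm0 mulr0.
set u := invmx (dlsubmx g) *m w.
have Cu : dlsubmx g *m u = w by rewrite mulKVmx // dlsubmx_unit.
have u_neq0 : u != 0 by apply: contraNneq w_neq0 => u0; rewrite -Cu u0 mulmx0.
rewrite leNgt -mulmxA -/u; apply/negP => Au_gt.
apply: (@g_VR_disjoint (col_mx u 0)); first exact/VR_col_mx0.
by rewrite mul_col_mx0 Cu /VR /= col_mxKu col_mxKd.
Qed.

End DisjointFromVR.

Theorem lemma7p3 (R : realType) (n : nat)
  (G : set 'M[R[i]]_(n.+1 + n.+1)) (r : R) :
  @type_L R n G -> 0 < r ->
  @VR R n r `<=` @Omega R n G ->
  (forall g : 'M[R[i]]_(n.+1 + n.+1), G g -> ~ @proj_eq R n g 1%:M ->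
     forall x, @VR R n r x -> ~ @VR R n r (g *m x)) ->
  exists2 R0 : R, 0 < R0 &
    forall g : 'M[R[i]]_(n.+1 + n.+1), G g -> ~ @proj_eq R n g 1%:M ->
      \det g = 1 ->
      [/\ \det (dlsubmx g) != 0,
          opnorm (ulsubmx g *m invmx (dlsubmx g)) <= R0 &
          opnorm (invmx (dlsubmx g) *m drsubmx g) <= R0].
Proof.
move=> [[G_unit _ _ G_invmx _] _] r_gt0 _ VR_disjoint.
exists r => // g Gg g_neq1 _.
have g_unit := G_unit g Gg.
have gV_unit : invmx g \in unitmx by rewrite unitmx_inv.
have g_disj := VR_disjoint g Gg g_neq1.
have gV_neq1 : ~ proj_eq (invmx g) 1%:M by move/proj_eq1_invmx.
have gV_disj := VR_disjoint _ (G_invmx g Gg) gV_neq1.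
have Cg_unit := dlsubmx_unit g_unit g_disj.
have CgV_unit := dlsubmx_unit gV_unit gV_disj.
split.
- by rewrite -unitfE -unitmxE.
- exact: opnorm_le (ltW r_gt0) (vnorm_ulsubmx_mul_invmx_dlsubmx_le g_unit g_disj).
rewrite (invmx_dlsubmx_mul_drsubmx (mulmxV g_unit)) //.
apply: opnorm_le (ltW r_gt0) _ => w; rewrite mulNmx vnormN.
exact: vnorm_ulsubmx_mul_invmx_dlsubmx_le.
Qed.
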